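(* The map $f$ is strictly increasing on $[a_0-1,a_0]$: if $x_1,x_2\in[a_0-1,a_0]$ and $x_1<x_2$, then $f(x_1)<f(x_2)$.
   Context: Let $Q=(q_k)_{k\ge1}$ be a sequence of integers with $q_k\ge 2$, and let $q\ge 2$ be an integer with $q_k\le q$ for all $k$. Put $a_0=\sum_{k\ge1}\frac{q_{2k}-1}{q_1q_2\cdots q_{2k}}$. Every $x\in[a_0-1,a_0]$ can be written as $x=\Delta^{-Q}_{\varepsilon_1\varepsilon_2\ldots}:=\sum_{k\ge1}\frac{(-1)^k\varepsilon_k}{q_1q_2\cdots q_k}$ with digits $\varepsilon_k\in\{0,1,\ldots,q_k-1\}$. Nega-$Q$-rational points have two representations, $\Delta^{-Q}_{\varepsilon_1\ldots\varepsilon_{m}[q_{m+1}-1]0[q_{m+3}-1]0\ldots}=\Delta^{-Q}_{\varepsilon_1\ldots\varepsilon_{m-1}[\varepsilon_m-1]0[q_{m+2}-1]0[q_{m+4}-1]0\ldots}$, and by convention only the first is used; other points have a unique representation. The map $f:[a_0-1,a_0]\to\mathbb R$ is $f\left(\Delta^{-Q}_{\varepsilon_1\varepsilon_2\ldots}\right)=\sum_{n\ge1}\frac{\varepsilon_n}{(-q)^n}$. *)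

From Stdlib Require Import Reals Lra Lia ClassicalEpsilon.
Open Scope R_scope.

(* A sequence Q = (q_k)_{k>=1} is represented by Qs : nat -> nat, only the
   values at indices k >= 1 being relevant.  Digit sequences eps : nat -> nat
   likewise use indices k >= 1 (eps 0 is ignored). *)

Fixpoint prodQ (Qs : nat -> nat) (k : nat) : R :=
  match k with
  | O => 1
  | S k' => prodQ Qs k' * INR (Qs (S k'))
  end.

Definition series_sum (u : nat -> R) : R :=
  epsilon (inhabits 0) (fun l => infinite_sum u l).

Definition a0 (Qs : nat -> nat) : R :=
  series_sum (fun n => (INR (Qs (2 * (n + 1))%nat) - 1) / prodQ Qs (2 * (n + 1))).

Definition valid_digits (Qs : nat -> nat) (eps : nat -> nat) : Prop :=
  forall k, (1 <= k)%nat -> (eps k < Qs k)%nat.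

Definition nega_Q_repr (Qs : nat -> nat) (eps : nat -> nat) (x : R) : Prop :=
  valid_digits Qs eps /\
  infinite_sum (fun n => (-1) ^ (n + 1) * INR (eps (n + 1)%nat) / prodQ Qs (n + 1)) x.

(* eps has the form of the SECOND (discarded) representation of a
   nega-Q-rational point:
   eps_1 ... eps_{m-1} [e_m - 1] 0 [q_{m+2}-1] 0 [q_{m+4}-1] 0 ...
   with 1 <= e_m <= q_m - 1, i.e. eps_m <= q_m - 2, m >= 1. *)
Definition second_form (Qs : nat -> nat) (eps : nat -> nat) : Prop :=
  exists m, (1 <= m)%nat /\ (eps m + 1 < Qs m)%nat /\
    forall j, eps (m + 1 + 2 * j)%nat = 0%nat /\
              eps (m + 2 + 2 * j)%nat = (Qs (m + 2 + 2 * j)%nat - 1)%nat.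

Definition conv_repr (Qs : nat -> nat) (x : R) (eps : nat -> nat) : Prop :=
  nega_Q_repr Qs eps x /\ ~ second_form Qs eps.

Definition digits (Qs : nat -> nat) (x : R) : nat -> nat :=
  epsilon (inhabits (fun _ => 0%nat)) (conv_repr Qs x).

Definition fQ (Qs : nat -> nat) (q : nat) (x : R) : R :=
  series_sum (fun n => INR (digits Qs x (n + 1)%nat) / (- INR q) ^ (n + 1)).

From Stdlib Require Import Reals Lra Lia ClassicalEpsilon.
Open Scope R_scope.

(* Existence of the conventional representation: put z = x + 1 - a0 in [0,1], v_0 = z, and choose
   eps_k as the largest digit with v_k = q_k (1 - v_{k-1}) - eps_k >= 0; then every v_k lies in
   [0,1].  Since a0 = 1 - sum_n (-1)^n / (q_1...q_n), telescoping shows that eps represents x.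
   Maximality of eps_m gives v_m < 1 whenever eps_m <= q_m - 2, whereas a tail
   0 [q_{m+2}-1] 0 [q_{m+4}-1] ... multiplies 1 - v_m by q_{m+1} q_{m+2} every two steps, which
   forces v_m = 1; so eps is the conventional representation.

   Monotonicity: for digit sequences A, B and radices r, the numerators
   N_{n+1} = r_{n+1} N_n + (-1)^{n+1} (B_{n+1} - A_{n+1}) satisfy
   sum_{k<=n} (-1)^k (B_k - A_k) / (r_1...r_k) = N_n / (r_1...r_n).  They are integers, so by
   induction passing to larger radices s (here the constant q) preserves their sign and does not
   decrease their modulus.  If x1 < x2, some numerator for Q exceeds 1, hence so does the one
   for q, and from then on (N_n - 1) / q^n is nondecreasing; thus f(x2) - f(x1) > 0. *)

Lemma series_sum_spec (u : nat -> R) :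
  (exists l, infinite_sum u l) -> infinite_sum u (series_sum u).
Proof. exact (epsilon_spec (inhabits 0) (infinite_sum u)). Qed.

Lemma series_sum_eq (u : nat -> R) (l : R) : infinite_sum u l -> series_sum u = l.
Proof.
  intros hl. apply (uniqueness_sum u); [apply series_sum_spec; now exists l | exact hl].
Qed.

Lemma infinite_sum_ext (u v : nat -> R) (l : R) :
  (forall n, u n = v n) -> infinite_sum u l -> infinite_sum v l.
Proof.
  intros huv hu e he. destruct (hu e he) as [N HN]. exists N. intros n hn.
  rewrite <- (sum_eq u v n) by auto. now apply HN.
Qed.

Lemma cv_ge_eventually (u : nat -> R) (l c : R) (N : nat) :
  Un_cv u l -> (forall n, (N <= n)%nat -> c <= u n) -> c <= l.
Proof.
  intros hl hu. destruct (Rle_or_lt c l) as [|hlc]; [assumption|].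
  destruct (hl (c - l)) as [M HM]; [lra|].
  specialize (HM (max N M) ltac:(lia)). specialize (hu (max N M) ltac:(lia)).
  unfold Rdist in HM. apply Rabs_def2 in HM. lra.
Qed.

Lemma cv_const (c : R) : Un_cv (fun _ => c) c.
Proof. intros e he. exists O. intros n _. unfold Rdist. rewrite Rminus_diag, Rabs_R0. exact he. Qed.

Lemma cv0_abs_le (u w : nat -> R) : (forall n, Rabs (u n) <= w n) -> Un_cv w 0 -> Un_cv u 0.
Proof.
  intros huw hw e he. destruct (hw e he) as [N HN]. exists N. intros n hn.
  specialize (HN n hn). unfold Rdist in *. rewrite Rminus_0_r in *.
  pose proof (huw n). pose proof (Rle_abs (w n)). lra.
Qed.

Lemma eq0_of_mul_pow2_le1 (c : R) : 0 <= c -> (forall j, c * 2 ^ j <= 1) -> c = 0.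
Proof.
  intros hc hj. destruct hc as [hc | hc]; [exfalso | now symmetry].
  destruct (pow_lt_1_zero (/ 2) ltac:(rewrite Rabs_pos_eq; lra) c hc) as [N HN].
  specialize (HN N (le_n N)). specialize (hj N). pose proof (pow_lt 2 N ltac:(lra)).
  rewrite pow_inv, Rabs_pos_eq in HN by (left; apply Rinv_0_lt_compat; lra).
  apply (Rmult_lt_compat_r (2 ^ N)) in HN; [|lra]. rewrite Rinv_l in HN; lra.
Qed.

Lemma pow_m1_cases k : (-1) ^ k = 1 \/ (-1) ^ k = -1.
Proof. induction k as [|k [IH | IH]]; simpl; [left | right | left]; try rewrite IH; lra. Qed.

Lemma Rinv_pow_m1 (k : nat) : / (-1) ^ k = (-1) ^ k.
Proof. rewrite <- pow_inv. f_equal. field. Qed.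

Definition nega_term (r d : nat -> nat) (n : nat) : R :=
  (-1) ^ (n + 1) * INR (d (n + 1)%nat) / prodQ r (n + 1).

Lemma prodQ_S (r : nat -> nat) (k : nat) : prodQ r (S k) = prodQ r k * INR (r (S k)).
Proof. reflexivity. Qed.

Lemma prodQ_const (q k : nat) : prodQ (fun _ => q) k = INR q ^ k.
Proof. induction k as [|k IH]; simpl; [reflexivity | rewrite IH; ring]. Qed.

Section RadixProducts.
Variable r : nat -> nat.
Hypothesis hr : forall k, (1 <= k)%nat -> (2 <= r k)%nat.

Lemma radix_ge2 k : (1 <= k)%nat -> 2 <= INR (r k).
Proof. intros hk. apply (le_INR 2). now apply hr. Qed.

Lemma prodQ_ge_pow2 n : 2 ^ n <= prodQ r n.
Proof.
  induction n as [|n IH]; simpl; [lra|].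
  pose proof (radix_ge2 (S n) ltac:(lia)). pose proof (pow_lt 2 n ltac:(lra)). nra.
Qed.

Lemma prodQ_pos n : 0 < prodQ r n.
Proof. pose proof (prodQ_ge_pow2 n). pose proof (pow_lt 2 n ltac:(lra)). lra. Qed.

Lemma inv_prodQ_le n : / prodQ r n <= (/ 2) ^ n.
Proof.
  rewrite pow_inv. apply Rinv_le_contravar; [apply pow_lt; lra | apply prodQ_ge_pow2].
Qed.

Lemma inv_prodQ_cv0 : Un_cv (fun n => / prodQ r n) 0.
Proof.
  intros e he. destruct (pow_lt_1_zero (/ 2) ltac:(rewrite Rabs_pos_eq; lra) e he) as [N HN].
  exists N. intros n hn. unfold Rdist. rewrite Rminus_0_r.
  pose proof (prodQ_pos n). pose proof (inv_prodQ_le n). specialize (HN n hn).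
  rewrite Rabs_pos_eq in * by (try apply pow_le; left; apply Rinv_0_lt_compat; lra). lra.
Qed.

Lemma nega_term_abs_le d n : valid_digits r d -> Rabs (nega_term r d n) <= (/ 2) ^ n.
Proof.
  intros hd. unfold nega_term. replace (n + 1)%nat with (S n) by lia.
  pose proof (prodQ_pos n). pose proof (radix_ge2 (S n) ltac:(lia)).
  assert (hdig : INR (d (S n)) <= INR (r (S n)) - 1).
  { rewrite <- (minus_INR _ 1) by (pose proof (hd (S n)); lia).
    apply le_INR. pose proof (hd (S n) ltac:(lia)). lia. }
  unfold Rdiv. rewrite !Rabs_mult, pow_1_abs, (Rabs_pos_eq (INR _)) by apply pos_INR.
  rewrite Rabs_pos_eq by (left; apply Rinv_0_lt_compat; rewrite prodQ_S; nra).
  apply (Rle_trans _ (/ prodQ r n)); [|apply inv_prodQ_le].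
  rewrite prodQ_S, Rinv_mult. apply (Rmult_le_reg_r (prodQ r n * INR (r (S n)))); [nra|].
  field_simplify; [lra | lra | lra].
Qed.

Lemma nega_series_cv d : valid_digits r d -> exists l, infinite_sum (nega_term r d) l.
Proof.
  intros hd.
  assert (hgeom : {l | Un_cv (sum_f_R0 (fun n => (/ 2) ^ n)) l}).
  { exists (/ (1 - / 2)). apply (infinite_sum_ext (fun n => 1 * (/ 2) ^ n)).
    - intros n. ring.
    - apply GP_infinite. rewrite Rabs_pos_eq; lra. }
  assert (habs : {l | Un_cv (sum_f_R0 (fun n => Rabs (nega_term r d n))) l}).
  { apply (Rseries_CV_comp _ _ (fun n => conj (Rabs_pos _) (nega_term_abs_le d n hd)) hgeom). }
  destruct (cv_cauchy_2 _ (cauchy_abs _ (cv_cauchy_1 _ habs))) as [l hl]. now exists l.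
Qed.

End RadixProducts.

Fixpoint numer (r : nat -> nat) (t : nat -> R) (N : nat) : R :=
  match N with
  | O => 0
  | S n => INR (r (S n)) * numer r t n + t (S n)
  end.

Definition digit_diff_bounded (r : nat -> nat) (t : nat -> R) : Prop :=
  forall k, (1 <= k)%nat -> - (INR (r k) - 1) <= t k <= INR (r k) - 1.

Section Numerators.
Variable r : nat -> nat.
Hypothesis hr : forall k, (1 <= k)%nat -> (2 <= r k)%nat.

Lemma sum_div_prodQ (t : nat -> R) N :
  sum_f_R0 (fun n => t (n + 1)%nat / prodQ r (n + 1)) N = numer r t (N + 1) / prodQ r (N + 1).
Proof.
  induction N as [|N IH].
  { pose proof (radix_ge2 r hr 1 (le_n 1)). simpl. field. lra. }
  rewrite tech5, IH. replace (S N + 1)%nat with (S (N + 1)) by lia.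
  pose proof (prodQ_pos r hr (N + 1)). pose proof (radix_ge2 r hr (S (N + 1)) ltac:(lia)).
  simpl. field. lra.
Qed.

Lemma numer_sub1_div_le (t : nat -> R) : digit_diff_bounded r t ->
  forall n m, (n <= m)%nat -> (numer r t n - 1) / prodQ r n <= (numer r t m - 1) / prodQ r m.
Proof.
  intros ht n m hnm. induction hnm as [|m _ IH]; [lra|].
  apply (Rle_trans _ _ _ IH).
  pose proof (prodQ_pos r hr m). pose proof (radix_ge2 r hr (S m) ltac:(lia)).
  pose proof (ht (S m) ltac:(lia)).
  simpl. apply (Rmult_le_reg_r (prodQ r m * INR (r (S m)))); [nra|].
  field_simplify; [nra | lra | lra].
Qed.

Definition signed_diff (A B : nat -> nat) (k : nat) : R := (-1) ^ k * (INR (B k) - INR (A k)).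

Lemma sum_nega_term_sub A B N :
  sum_f_R0 (nega_term r B) N - sum_f_R0 (nega_term r A) N
  = numer r (signed_diff A B) (N + 1) / prodQ r (N + 1).
Proof.
  rewrite <- minus_sum, <- sum_div_prodQ. apply sum_eq. intros n _.
  pose proof (prodQ_pos r hr (n + 1)). unfold nega_term, signed_diff. field. lra.
Qed.

Lemma numer_cv A B xA xB :
  infinite_sum (nega_term r A) xA -> infinite_sum (nega_term r B) xB ->
  Un_cv (fun n => numer r (signed_diff A B) (n + 1) / prodQ r (n + 1)) (xB - xA).
Proof.
  intros hA hB.
  apply (Un_cv_ext (fun n => sum_f_R0 (nega_term r B) n - sum_f_R0 (nega_term r A) n)).
  - intros n. apply sum_nega_term_sub.
  - now apply CV_minus.
Qed.

Lemma numer_gt1_of_cv_pos (t : nat -> R) L :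
  Un_cv (fun n => numer r t (n + 1) / prodQ r (n + 1)) L -> 0 < L ->
  exists N, 1 < numer r t (N + 1).
Proof.
  intros hL hpos.
  assert (hcv : Un_cv (fun n => numer r t (n + 1) / prodQ r (n + 1) - / prodQ r (n + 1)) (L - 0))
    by exact (CV_minus _ _ _ _ hL (CV_shift' _ 1 0 (inv_prodQ_cv0 r hr))).
  destruct (hcv L hpos) as [N HN]. exists N.
  specialize (HN N (le_n N)). unfold Rdist in HN. apply Rabs_def2 in HN.
  pose proof (prodQ_pos r hr (N + 1)).
  apply (Rmult_lt_reg_r (/ prodQ r (N + 1))); [now apply Rinv_0_lt_compat|].
  rewrite Rmult_1_l. unfold Rdiv in HN. lra.
Qed.

Lemma numer_cv_ge (t : nat -> R) L N : digit_diff_bounded r t ->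
  Un_cv (fun n => numer r t (n + 1) / prodQ r (n + 1)) L ->
  (numer r t (N + 1) - 1) / prodQ r (N + 1) <= L.
Proof.
  intros ht hL. apply (cv_ge_eventually _ _ _ N hL). intros n hn.
  pose proof (prodQ_pos r hr (n + 1)).
  apply (Rle_trans _ ((numer r t (n + 1) - 1) / prodQ r (n + 1))).
  - apply numer_sub1_div_le; [exact ht | lia].
  - apply Rmult_le_compat_r; [left; now apply Rinv_0_lt_compat | lra].
Qed.

End Numerators.

Section LargerRadix.
Variables r s : nat -> nat.
Hypothesis hr : forall k, (1 <= k)%nat -> (2 <= r k)%nat.
Hypothesis hrs : forall k, (1 <= k)%nat -> (r k <= s k)%nat.

Lemma larger_radix_ge2 k : (1 <= k)%nat -> (2 <= s k)%nat.
Proof. intros hk. specialize (hr k hk). specialize (hrs k hk). lia. Qed.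

Section IntegralDigits.
Variable t : nat -> R.
Hypothesis ht : digit_diff_bounded r t.
Hypothesis ht_int : forall k, (1 <= k)%nat -> t k = 0 \/ 1 <= t k \/ t k <= -1.

Lemma numer_larger_radix N :
  (numer r t N = 0 /\ numer s t N = 0) \/
  (1 <= numer r t N <= numer s t N) \/ (numer s t N <= numer r t N <= -1).
Proof.
  induction N as [|N IH]; [left; simpl; lra|].
  pose proof (ht (S N) ltac:(lia)). pose proof (le_INR _ _ (hrs (S N) ltac:(lia))).
  pose proof (radix_ge2 r hr (S N) ltac:(lia)).
  simpl. destruct IH as [[-> ->] | [[h1 h2] | [h1 h2]]].
  - destruct (ht_int (S N) ltac:(lia)) as [h | [h | h]]; rewrite !Rmult_0_r, !Rplus_0_l; lra.
  - right; left. nra.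
  - right; right. nra.
Qed.

Lemma numer_gt1_larger_radix N : 1 < numer r t N -> 1 < numer s t N.
Proof. intros h. destruct (numer_larger_radix N) as [[] | [[] | []]]; lra. Qed.

End IntegralDigits.

Lemma signed_diff_bounded A B : valid_digits r A -> valid_digits r B ->
  digit_diff_bounded r (signed_diff A B).
Proof.
  intros hA hB k hk. unfold signed_diff.
  assert (hdig : forall D, valid_digits r D -> 0 <= INR (D k) <= INR (r k) - 1).
  { intros D hD. split; [apply pos_INR|].
    rewrite <- (minus_INR _ 1) by (specialize (hr k hk); lia).
    apply le_INR. specialize (hD k hk). lia. }
  pose proof (hdig A hA). pose proof (hdig B hB).
  destruct (pow_m1_cases k) as [-> | ->]; lra.
Qed.

Lemma signed_diff_integral A B k :
  signed_diff A B k = 0 \/ 1 <= signed_diff A B k \/ signed_diff A B k <= -1.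
Proof.
  unfold signed_diff.
  assert (h : INR (B k) - INR (A k) = 0 \/ 1 <= INR (B k) - INR (A k) \/
              INR (B k) - INR (A k) <= -1).
  { destruct (Nat.lt_trichotomy (A k) (B k)) as [h | [-> | h]].
    - right; left. apply le_INR in h. rewrite S_INR in h. lra.
    - left. lra.
    - right; right. apply le_INR in h. rewrite S_INR in h. lra. }
  destruct (pow_m1_cases k) as [-> | ->]; lra.
Qed.

Theorem nega_sum_lt_larger_radix A B xA xB yA yB :
  valid_digits r A -> valid_digits r B ->
  infinite_sum (nega_term r A) xA -> infinite_sum (nega_term r B) xB ->
  infinite_sum (nega_term s A) yA -> infinite_sum (nega_term s B) yB ->
  xA < xB -> yA < yB.
Proof.
  intros hA hB cxA cxB cyA cyB hlt.
  pose proof larger_radix_ge2 as hs.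
  assert (htr : digit_diff_bounded r (signed_diff A B)) by now apply signed_diff_bounded.
  assert (hts : digit_diff_bounded s (signed_diff A B)).
  { intros k hk. pose proof (le_INR _ _ (hrs k hk)). specialize (htr k hk). lra. }
  destruct (numer_gt1_of_cv_pos r hr _ _ (numer_cv r hr A B xA xB cxA cxB) ltac:(lra)) as [N hN].
  pose proof (numer_gt1_larger_radix _ htr (fun k _ => signed_diff_integral A B k) _ hN).
  pose proof (numer_cv_ge s hs _ _ N hts (numer_cv s hs A B yA yB cyA cyB)).
  assert (0 < (numer s (signed_diff A B) (N + 1) - 1) / prodQ s (N + 1))
    by (apply Rdiv_lt_0_compat; [lra | apply prodQ_pos; exact hs]).
  lra.
Qed.

End LargerRadix.

Fixpoint greedy_digit (m : nat) (y : R) : nat :=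
  match m with
  | O => O
  | S m' => if Rle_dec (INR m) y then m else greedy_digit m' y
  end.

Lemma greedy_digit_spec m y : 0 <= y ->
  (greedy_digit m y <= m)%nat /\ INR (greedy_digit m y) <= y /\
  ((greedy_digit m y < m)%nat -> y < INR (S (greedy_digit m y))).
Proof.
  intros hy. induction m as [|m IH]; cbn [greedy_digit].
  { simpl. split; [lia | split; [lra | lia]]. }
  destruct (Rle_dec (INR (S m)) y) as [h | h].
  { split; [lia | split; [exact h | intros; lia]]. }
  destruct IH as [h1 [h2 h3]]. split; [lia | split; [exact h2 | intros _]].
  destruct (Nat.eq_dec (greedy_digit m y) m) as [-> | hne]; [lra|]. apply h3. lia.
Qed.

Lemma greedy_digit_rem n y : (1 <= n)%nat -> 0 <= y <= INR n ->
  (greedy_digit (n - 1) y < n)%nat /\ 0 <= y - INR (greedy_digit (n - 1) y) <= 1 /\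
  ((S (greedy_digit (n - 1) y) < n)%nat -> y - INR (greedy_digit (n - 1) y) < 1).
Proof.
  intros hn hy. destruct (greedy_digit_spec (n - 1) y (proj1 hy)) as [h1 [h2 h3]].
  rewrite S_INR in h3. repeat split; [lia | lra | | intros h; specialize (h3 ltac:(lia)); lra].
  destruct (Nat.eq_dec (greedy_digit (n - 1) y) (n - 1)) as [-> | hne].
  - rewrite minus_INR by lia. simpl. lra.
  - specialize (h3 ltac:(lia)). lra.
Qed.

Fixpoint nega_rem (Qs : nat -> nat) (z : R) (k : nat) : R :=
  match k with
  | O => z
  | S k' =>
      let y := INR (Qs k) * (1 - nega_rem Qs z k') in y - INR (greedy_digit (Qs k - 1) y)
  end.

Definition greedy_digits (Qs : nat -> nat) (z : R) (k : nat) : nat :=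
  match k with
  | O => O
  | S k' => greedy_digit (Qs k - 1) (INR (Qs k) * (1 - nega_rem Qs z k'))
  end.

Lemma nega_rem_S Qs z k :
  nega_rem Qs z (S k) = INR (Qs (S k)) * (1 - nega_rem Qs z k) - INR (greedy_digits Qs z (S k)).
Proof. reflexivity. Qed.

Section Greedy.
Variable Qs : nat -> nat.
Hypothesis hQ : forall k, (1 <= k)%nat -> (2 <= Qs k)%nat.

Lemma alt_inv_prodQ_cv : {l | Un_cv (sum_f_R0 (tg_alt (fun n => / prodQ Qs n))) l}.
Proof.
  apply alternated_series; [|exact (inv_prodQ_cv0 Qs hQ)].
  intros n. pose proof (prodQ_pos Qs hQ n). pose proof (radix_ge2 Qs hQ (S n) ltac:(lia)).
  apply Rinv_le_contravar; [lra|]. rewrite prodQ_S. nra.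
Qed.

Lemma a0_partial_sum M :
  sum_f_R0 (fun n => (INR (Qs (2 * (n + 1))%nat) - 1) / prodQ Qs (2 * (n + 1))) M
  = 1 - sum_f_R0 (tg_alt (fun n => / prodQ Qs n)) (2 * M + 2).
Proof.
  assert (hodd : forall n, (INR (Qs (2 * (n + 1))%nat) - 1) / prodQ Qs (2 * (n + 1))
                  = / prodQ Qs (2 * n + 1) - / prodQ Qs (2 * n + 2)).
  { intros n. replace (2 * (n + 1))%nat with (S (2 * n + 1)) by lia.
    replace (2 * n + 2)%nat with (S (2 * n + 1)) by lia.
    pose proof (prodQ_pos Qs hQ (2 * n + 1)).
    pose proof (radix_ge2 Qs hQ (S (2 * n + 1)) ltac:(lia)).
    rewrite prodQ_S. field. lra. }
  unfold tg_alt. induction M as [|M IH].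
  - pose proof (radix_ge2 Qs hQ 1 (le_n 1)). pose proof (radix_ge2 Qs hQ 2 ltac:(lia)).
    simpl. field. lra.
  - rewrite tech5, IH, hodd.
    replace (2 * S M + 2)%nat with (S (S (2 * M + 2))) by lia. rewrite !tech5.
    replace (S (2 * M + 2)) with (2 * S M + 1)%nat by lia.
    replace (S (2 * S M + 1)) with (2 * S M + 2)%nat by lia.
    replace (2 * S M + 1)%nat with (S (2 * S M)) by lia.
    replace (2 * S M + 2)%nat with (2 * S (S M))%nat by lia.
    rewrite pow_1_odd, pow_1_even. lra.
Qed.

Lemma a0_eq_alt l : Un_cv (sum_f_R0 (tg_alt (fun n => / prodQ Qs n))) l -> a0 Qs = 1 - l.
Proof.
  intros hl. apply series_sum_eq. intros e he. destruct (hl e he) as [N HN].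
  exists N. intros n hn. rewrite a0_partial_sum. unfold Rdist.
  replace (1 - _ - (1 - l))
    with (- (sum_f_R0 (tg_alt (fun n => / prodQ Qs n)) (2 * n + 2) - l)) by ring.
  rewrite Rabs_Ropp. apply HN. lia.
Qed.

Variable z : R.
Hypothesis hz : 0 <= z <= 1.

Lemma greedy_step k : 0 <= nega_rem Qs z k <= 1 ->
  (greedy_digits Qs z (S k) < Qs (S k))%nat /\ 0 <= nega_rem Qs z (S k) <= 1 /\
  ((S (greedy_digits Qs z (S k)) < Qs (S k))%nat -> nega_rem Qs z (S k) < 1).
Proof.
  intros hv. pose proof (radix_ge2 Qs hQ (S k) ltac:(lia)).
  apply greedy_digit_rem; [specialize (hQ (S k)); lia | nra].
Qed.

Lemma nega_rem_range k : 0 <= nega_rem Qs z k <= 1.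
Proof. induction k as [|k IH]; [exact hz | apply (greedy_step k IH)]. Qed.

Lemma greedy_digits_valid : valid_digits Qs (greedy_digits Qs z).
Proof.
  intros [|k] hk; [lia|]. apply (greedy_step k (nega_rem_range k)).
Qed.

Lemma nega_rem_lt1 k : (S (greedy_digits Qs z (S k)) < Qs (S k))%nat -> nega_rem Qs z (S k) < 1.
Proof. apply (greedy_step k (nega_rem_range k)). Qed.

Lemma greedy_digits_S k :
  INR (greedy_digits Qs z (S k)) = INR (Qs (S k)) * (1 - nega_rem Qs z k) - nega_rem Qs z (S k).
Proof. rewrite nega_rem_S. ring. Qed.

(* With u_k = (-1)^k v_k / (q_1...q_k), each term is (-1)^k / (q_1...q_{k-1}) + u_{k-1} - u_k. *)
Lemma greedy_partial_sum N :
  sum_f_R0 (nega_term Qs (greedy_digits Qs z)) N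
  = z - sum_f_R0 (tg_alt (fun n => / prodQ Qs n)) N
    - (-1) ^ (N + 1) * nega_rem Qs z (N + 1) / prodQ Qs (N + 1).
Proof.
  induction N as [|N IH].
  - pose proof (radix_ge2 Qs hQ 1 (le_n 1)).
    unfold nega_term, tg_alt. cbn [sum_f_R0]. change (0 + 1)%nat with 1%nat.
    rewrite greedy_digits_S. simpl. field. lra.
  - rewrite !tech5, IH. unfold nega_term, tg_alt.
    replace (S N + 1)%nat with (S (S N)) by lia. replace (N + 1)%nat with (S N) by lia.
    rewrite greedy_digits_S.
    pose proof (prodQ_pos Qs hQ (S N)). pose proof (radix_ge2 Qs hQ (S (S N)) ltac:(lia)).
    rewrite (prodQ_S Qs (S N)). simpl pow. field. lra.
Qed.

Lemma greedy_digits_sum : infinite_sum (nega_term Qs (greedy_digits Qs z)) (z + a0 Qs - 1).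
Proof.
  destruct alt_inv_prodQ_cv as [l hl]. rewrite (a0_eq_alt l hl).
  assert (hrem : Un_cv (fun N => (-1) ^ (N + 1) * nega_rem Qs z (N + 1) / prodQ Qs (N + 1)) 0).
  { apply (cv0_abs_le _ (fun N => / prodQ Qs (N + 1)));
      [|exact (CV_shift' _ 1 0 (inv_prodQ_cv0 Qs hQ))].
    intros N. pose proof (prodQ_pos Qs hQ (N + 1)). pose proof (nega_rem_range (N + 1)).
    assert (0 < / prodQ Qs (N + 1)) by (apply Rinv_0_lt_compat; lra).
    unfold Rdiv. rewrite !Rabs_mult, pow_1_abs, (Rabs_pos_eq (nega_rem _ _ _)), Rabs_pos_eq; nra. }
  apply (Un_cv_ext _ _ (fun N => eq_sym (greedy_partial_sum N))).
  replace (z + (1 - l) - 1) with (z - l - 0) by ring.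
  apply CV_minus; [apply CV_minus; [apply cv_const | exact hl] | exact hrem].
Qed.

Lemma greedy_not_second_form : ~ second_form Qs (greedy_digits Qs z).
Proof.
  intros [m [hm [hmax htail]]].
  set (w j := 1 - nega_rem Qs z (m + 2 * j)).
  assert (hw : forall j, 0 <= w j <= 1).
  { intros j. pose proof (nega_rem_range (m + 2 * j)). unfold w. lra. }
  assert (hstep : forall j,
            w (S j) = INR (Qs (m + 1 + 2 * j)%nat) * INR (Qs (m + 2 + 2 * j)%nat) * w j).
  { intros j. destruct (htail j) as [h0 hq].
    unfold w. replace (m + 2 * S j)%nat with (S (S (m + 2 * j))) by lia.
    rewrite !nega_rem_S.
    replace (S (m + 2 * j)) with (m + 1 + 2 * j)%nat by lia.
    replace (S (m + 1 + 2 * j)) with (m + 2 + 2 * j)%nat by lia.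
    rewrite h0, hq, minus_INR by (specialize (hQ (m + 2 + 2 * j)%nat); lia). simpl. ring. }
  assert (hgrow : forall j, w 0%nat * 2 ^ j <= 1).
  { enough (hlow : forall j, w 0%nat * 2 ^ j <= w j)
      by (intros j; specialize (hw j); specialize (hlow j); lra).
    induction j as [|j IH]; [simpl; lra|].
    rewrite hstep. pose proof (radix_ge2 Qs hQ (m + 1 + 2 * j) ltac:(lia)).
    pose proof (radix_ge2 Qs hQ (m + 2 + 2 * j) ltac:(lia)).
    assert (2 <= INR (Qs (m + 1 + 2 * j)%nat) * INR (Qs (m + 2 + 2 * j)%nat)) by nra.
    specialize (hw j). change (2 ^ S j) with (2 * 2 ^ j). nra. }
  pose proof (eq0_of_mul_pow2_le1 (w 0%nat) (proj1 (hw 0%nat)) hgrow) as hw0.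
  unfold w in hw0. rewrite Nat.add_0_r in hw0.
  destruct m as [|m]; [lia|]. pose proof (nega_rem_lt1 m ltac:(lia)). lra.
Qed.

End Greedy.

Theorem conv_repr_exists Qs x : (forall k, (1 <= k)%nat -> (2 <= Qs k)%nat) ->
  a0 Qs - 1 <= x <= a0 Qs -> exists eps, conv_repr Qs x eps.
Proof.
  intros hQ hx. set (z := x + 1 - a0 Qs).
  assert (hz : 0 <= z <= 1) by (unfold z; lra).
  exists (greedy_digits Qs z). split; [split|].
  - exact (greedy_digits_valid Qs hQ z hz).
  - replace x with (z + a0 Qs - 1) by (unfold z; ring). exact (greedy_digits_sum Qs hQ z hz).
  - exact (greedy_not_second_form Qs hQ z hz).
Qed.

Lemma fQ_term_eq q d n :
  INR (d (n + 1)%nat) / (- INR q) ^ (n + 1) = nega_term (fun _ => q) d n.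
Proof.
  unfold nega_term. rewrite prodQ_const.
  replace (- INR q) with (-1 * INR q) by ring.
  rewrite Rpow_mult_distr. unfold Rdiv. rewrite Rinv_mult, Rinv_pow_m1. ring.
Qed.

Lemma fQ_infinite_sum Qs q x : (2 <= q)%nat -> valid_digits (fun _ => q) (digits Qs x) ->
  infinite_sum (nega_term (fun _ => q) (digits Qs x)) (fQ Qs q x).
Proof.
  intros hq hd. apply (infinite_sum_ext _ _ _ (fQ_term_eq q _)).
  apply series_sum_spec.
  destruct (nega_series_cv (fun _ => q) (fun _ _ => hq) _ hd) as [l hl].
  exists l. exact (infinite_sum_ext _ _ _ (fun n => eq_sym (fQ_term_eq q _ n)) hl).
Qed.

Theorem mainTheorem3 (Qs : nat -> nat) (q : nat)
  (hq : (2 <= q)%nat)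
  (hQ : forall k, (1 <= k)%nat -> (2 <= Qs k)%nat /\ (Qs k <= q)%nat)
  (x1 x2 : R)
  (hx1 : a0 Qs - 1 <= x1 <= a0 Qs)
  (hx2 : a0 Qs - 1 <= x2 <= a0 Qs)
  (hlt : x1 < x2) :
  fQ Qs q x1 < fQ Qs q x2.
Proof.
  assert (hQ2 : forall k, (1 <= k)%nat -> (2 <= Qs k)%nat) by apply hQ.
  assert (hQq : forall k, (1 <= k)%nat -> (Qs k <= q)%nat) by apply hQ.
  assert (hrepr : forall x, a0 Qs - 1 <= x <= a0 Qs -> conv_repr Qs x (digits Qs x)).
  { intros x hx. exact (epsilon_spec _ _ (conv_repr_exists Qs x hQ2 hx)). }
  destruct (hrepr x1 hx1) as [[hv1 hs1] _]. destruct (hrepr x2 hx2) as [[hv2 hs2] _].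
  assert (hvq : forall d, valid_digits Qs d -> valid_digits (fun _ => q) d).
  { intros d hd k hk. specialize (hd k hk). specialize (hQq k hk). lia. }
  exact (nega_sum_lt_larger_radix Qs (fun _ => q) hQ2 hQq _ _ _ _ _ _ hv1 hv2 hs1 hs2
           (fQ_infinite_sum Qs q x1 hq (hvq _ hv1)) (fQ_infinite_sum Qs q x2 hq (hvq _ hv2)) hlt).
Qed.
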